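(* Let $r>2$. Then \[\sum_{k_1,\dots,k_r=1}^K\hat I_K^{\pm}(k_1)\cdots\hat I_K^{\pm}(k_r)\,q^{-(k_1+\dots+k_r)/2}\sum_{\substack{m\mid\gcd(k_1,\dots,k_r)\\ mp\nmid\gcd(k_1,\dots,k_r)}}\pi(m)m^r=O(1),\] with the bound independent of $K$.
   Context: $q$ is a power of an odd prime $p$; $\pi(m)$ is the number of monic irreducible polynomials of degree $m$ in $\mathbb{F}_q[X]$. $\mathcal{I}=[-\beta/2,\beta/2]$, $0<\beta<1$. $e(x)=e^{2\pi ix}$. For $K\ge1$, $I_K^{\pm}(x)=\sum_{|k|\le K}\hat I_K^{\pm}(k)e(kx)$ are the Beurling–Selberg majorant/minorant trigonometric polynomials of degree $\le K$ of $\chi_{\mathcal{I}}$ (Montgomery, Ten Lectures, Ch. 1.2): $I_K^-\le\chi_{\mathcal{I}}\le I_K^+$, $\int I_K^{\pm}=|\mathcal{I}|\pm\frac1{K+1}$, even, and $|\hat I_K^{\pm}(k)-\hat\chi_{\mathcal{I}}(k)|\le\frac1{K+1}$. *)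

From HB Require Import structures.
From mathcomp Require Import all_boot all_order all_algebra all_field.
From mathcomp Require Import all_classical all_reals all_analysis.
Set Implicit Arguments. Unset Strict Implicit. Unset Printing Implicit Defensive.
Import Order.TTheory GRing.Theory Num.Theory.
Import numFieldNormedType.Exports.
Local Open Scope classical_set_scope.
Local Open Scope ring_scope.

Definition monic_of (F : fieldType) (m : nat) (c : {ffun 'I_m -> F}) : {poly F} :=
  'X^m + \sum_(i < m) (c i)%:P * 'X^i.

Definition npi (F : finFieldType) (m : nat) : nat :=
  #|[set c : {ffun 'I_m -> F} | `[< irreducible_poly (monic_of c) >] ]|.

(* Indicator of I = [-beta/2, beta/2], on the fundamental domain [-1/2,1/2]. *)
Definition chiI (R : realType) (beta : R) (x : R) : R :=
  if `|x| <= beta / 2 then 1 else 0.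

(* Fourier coefficient of chi_I: int_{-beta/2}^{beta/2} e(-kx) dx; the
   imaginary part vanishes by symmetry, so this is the cosine integral. *)
Definition chihat (R : realType) (beta : R) (k : int) : R :=
  \int[lebesgue_measure]_(x in `[- (beta / 2), beta / 2]) cos (2 * pi * k%:~R * x).

(* The trigonometric polynomial sum_{|k|<=K} a(k) e(kx), for real even
   coefficients a (a(-k) = a(k)), where it equals sum a(k) cos(2 pi k x). *)
Definition tpoly (R : realType) (a : int -> R) (K : nat) (x : R) : R :=
  \sum_(j < (2 * K).+1)
     a (j%:Z - K%:Z) * cos (2 * pi * (j%:Z - K%:Z)%:~R * x).

(* Ihat K = Fourier coefficients of the Beurling-Selberg majorant (s = true)
   resp. minorant (s = false) of degree <= K of chi_I, with the properties
   listed in the paper. *)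
Definition BS_family (R : realType) (beta : R) (s : bool)
    (Ihat : nat -> int -> R) : Prop :=
  forall K : nat, (1 <= K)%N ->
    [/\ (forall k : int, Ihat K (- k) = Ihat K k),
        (forall x : R, - (1/2) <= x <= 1/2 ->
           if s then chiI beta x <= tpoly (Ihat K) K x
           else tpoly (Ihat K) K x <= chiI beta x),
        \int[lebesgue_measure]_(x in `[- (1/2), 1/2]) tpoly (Ihat K) K x
          = beta + (if s then 1 else -1) / K.+1%:R
      & (forall k : int, `|k| <= K%:Z ->
           `|Ihat K k - chihat beta k| <= 1 / K.+1%:R)].

Definition S93 (R : realType) (F : finFieldType) (p r : nat)
    (Ihat : nat -> int -> R) (K : nat) : R :=
  \sum_(k : {ffun 'I_r -> 'I_K})
    (\prod_(i < r) Ihat K (k i).+1%:Z)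
    * ((#|F|%:R : R) `^ (- ((\sum_(i < r) (k i).+1)%N%:R / 2)))
    * (\sum_(m <- divisors (\big[gcdn/0%N]_(i < r) (k i).+1)
             | ~~ (m * p %| \big[gcdn/0%N]_(i < r) (k i).+1)%N)
          (npi F m)%:R * m%:R ^+ r).

From mathcomp Require Import all_boot all_order all_algebra all_field.
From mathcomp Require Import all_classical all_reals all_analysis.
From mathcomp Require Import ring lra.
Import numFieldNormedType.Exports.
Set Implicit Arguments. Unset Strict Implicit. Unset Printing Implicit Defensive.
Import Order.TTheory GRing.Theory Num.Theory.
Local Open Scope ring_scope.

(* Each coefficient is bounded by [beta + 1], and the divisor sum by
   [g^(r+1) q^g], where [g = gcd k_i] satisfies [r g <= S := sum k_i].  As
   [r >= 3], the factor [q^g] is absorbed by [q^(-S/2)], leaving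
   [q^(-S/6) = prod_i q^(-k_i/6)]; moreover [g^(r+1) <= (prod_i k_i)^2].  The
   summand is therefore dominated by [prod_i (beta + 1) k_i^2 q^(-k_i/6)], and
   the whole sum by the [r]-th power of [(beta + 1) sum_k k^2 q^(-k/6) < oo]. *)

Section FourierCoefficients.
Variable R : realType.

Lemma norm_chihat_le (beta : R) (k : int) : 0 < beta -> `|chihat beta k| <= beta.
Proof.
move=> beta_gt0; rewrite /chihat; set c := 2 * pi * k%:~R.
have cos_int : lebesgue_measure.-integrable `[- (beta / 2), beta / 2]
    (EFin \o (fun x : R => cos (c * x))).
  apply: continuous_compact_integrable; first exact: segment_compact.
  apply: continuous_subspaceT => x.
  exact: continuous_comp (@mulrl_continuous R c x) (@continuous_cos R (c * x)).
apply: (le_trans (le_normr_Rintegral _ cos_int)); first exact: measurable_itv.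
apply: (le_trans (le_Rintegral _ (integrable_norm cos_int) _
    (fun x _ => cos_max (c * x)))); first exact: measurable_itv.
  apply: continuous_compact_integrable; first exact: segment_compact.
  by apply: continuous_subspaceT => x; exact: cvg_cst.
rewrite Rintegral_cst; last exact: measurable_itv.
rewrite [X in fine X]lebesgue_measure_itv /= lte_fin.
by rewrite gtrN ?divr_gt0 // mul1r /= opprK -splitr.
Qed.

Lemma BS_coef_norm_le (beta : R) (s : bool) (Ihat : nat -> int -> R) K k :
  0 < beta -> BS_family beta s Ihat -> (1 <= K)%N -> `|k| <= K%:Z ->
  `|Ihat K k| <= beta + 1.
Proof.
move=> beta_gt0 hI K_gt0 kK; have [_ _ _ /(_ k kK) near_chihat] := hI K K_gt0.
rewrite -(subrK (chihat beta k) (Ihat K k)) addrC.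
apply: le_trans (ler_normD _ _) _; apply: lerD; first exact: norm_chihat_le.
by apply: le_trans near_chihat _; rewrite ler_pdivrMr ?ltr0n // mul1r ler1n.
Qed.

End FourierCoefficients.

Section PowerTimesGeometric.
Variable R : realType.

Lemma natr_mul_le_expr (d : R) n : 0 <= d -> n%:R * d <= (1 + d) ^+ n.
Proof.
move=> d_ge0; elim: n => [|n IH]; first by rewrite mul0r exprn_ge0 // addr_ge0.
have one_le : 1 <= (1 + d) ^+ n by rewrite exprn_ege1 // lerDl.
rewrite exprSr mulrDr mulr1 -natr1 mulrDl mul1r.
apply: lerD => //.
by rewrite -[X in X <= _]mul1r ler_wpM2r.
Qed.

Lemma sum_sqr_geometric_bounded (v : R) : 0 < v -> v < 1 ->
  exists M : R, forall n, \sum_(j < n) j.+1%:R ^+ 2 * v ^+ j.+1 <= M.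
Proof.
move=> v_gt0 v_lt1; set d := (1 - v) / 4; set z := (1 + d) ^+ 2 * v.
have d_gt0 : 0 < d by rewrite divr_gt0 // subr_gt0.
have [v_ge0 d_ge0] := (ltW v_gt0, ltW d_gt0).
have z_gt0 : 0 < z by rewrite mulr_gt0 // exprn_gt0 // addr_gt0.
(* [(1 + d)^2 v < 1] is [(5 - v)^2 v < 16], true on [0, 1). *)
have z_lt1 : z < 1 by rewrite /z /d expr2; nra.
have d2_gt0 : 0 < d ^+ 2 by rewrite exprn_gt0.
exists (d ^-2 / (1 - z)) => n.
have term_le j : j.+1%:R ^+ 2 * v ^+ j.+1 <= d ^-2 * (1 * z ^+ j.+1).
  have -> : z ^+ j.+1 = ((1 + d) ^+ j.+1) ^+ 2 * v ^+ j.+1.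
    by rewrite exprMn -!exprM mulnC.
  rewrite mul1r mulrA; apply: ler_wpM2r; first exact: exprn_ge0.
  rewrite ler_pdivlMl // mulrC -exprMn lerXn2r ?nnegrE ?natr_mul_le_expr //.
    by rewrite mulr_ge0.
  by rewrite exprn_ge0 // addr_ge0.
apply: (le_trans (ler_sum _ (fun (j : 'I_n) _ => term_le j))).
rewrite -mulr_sumr ler_pM2l ?invr_gt0 //.
rewrite -[(1 - z)^-1]mul1r.
apply: le_trans (geometric_le_lim n.+1 ler01 z_gt0 _); last by rewrite gtr0_norm.
by rewrite /series /= big_mkord big_ord_recl /= lerDr expr0 mulr1.
Qed.

End PowerTimesGeometric.

Section BigGcd.
Variables (I : finType) (a : I -> nat).
Hypothesis a_gt0 : forall i, (0 < a i)%N.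
Let g := (\big[gcdn/0]_i a i)%N.

Lemma biggcdn_leq i : (g <= a i)%N.
Proof. by apply: dvdn_leq (a_gt0 i) _; apply: biggcdn_inf (dvdnn _). Qed.

Lemma card_mul_biggcdn_leq_sum : (#|I| * g <= \sum_i a i)%N.
Proof. by rewrite -sum_nat_const leq_sum // => i _; exact: biggcdn_leq. Qed.

Lemma expn_biggcdn_leq_prod : (g ^ #|I| <= \prod_i a i)%N.
Proof. by rewrite -prod_nat_const leq_prod // => i _; exact: biggcdn_leq. Qed.

End BigGcd.

Lemma size_divisors_leq g : (0 < g)%N -> (size (divisors g) <= g)%N.
Proof.
move=> g_gt0; rewrite -[X in (_ <= X)%N](size_iota 1 g).
apply: uniq_leq_size (divisors_uniq g) _ => m; rewrite -dvdn_divisors // => mg.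
by rewrite mem_iota (dvdn_gt0 g_gt0 mg) add1n ltnS dvdn_leq.
Qed.

Lemma npi_leq (F : finFieldType) m : (npi F m <= #|F| ^ m)%N.
Proof. by rewrite /npi (leq_trans (max_card _)) // card_ffun card_ord. Qed.

Lemma sum_divisors_npi_le (R : realType) (F : finFieldType) (P : pred nat) r g :
  (0 < g)%N ->
  \sum_(m <- divisors g | P m) (npi F m)%:R * m%:R ^+ r
    <= (g ^ r.+1 * #|F| ^ g)%N%:R :> R.
Proof.
move=> g_gt0; have q_gt0 : (0 < #|F|)%N by rewrite (ltn_trans _ (finNzRing_gt1 F)).
apply: le_trans (_ : _ <= \sum_(m <- divisors g) (#|F| ^ g * g ^ r)%N%:R) _.
  rewrite big_mkcond /= !big_seq; apply: ler_sum => m; rewrite -dvdn_divisors //.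
  move=> mg; case: (P m); last exact: ler0n.
  rewrite -natrX -natrM ler_nat.
  have m_le_g := dvdn_leq g_gt0 mg.
  apply: leq_mul; last by case: (r) => // r'; rewrite leq_exp2r.
  exact: leq_trans (npi_leq F m) (leq_pexp2l q_gt0 m_le_g).
rewrite -natr_sum ler_nat big_const_seq count_predT iter_addn_0.
have -> : (g ^ r.+1 * #|F| ^ g = #|F| ^ g * g ^ r * g)%N by rewrite expnSr; ring.
by rewrite leq_mul2l size_divisors_leq ?orbT.
Qed.

Lemma powR_weight_le (R : realType) (x : R) (S g : nat) : 1 <= x ->
  (3 * g <= S)%N -> x `^ (- (S%:R / 2)) * x ^+ g <= (x `^ (- 6^-1)) ^+ S.
Proof.
move=> x_ge1 gS; have x_gt0 : 0 < x by rewrite (lt_le_trans ltr01).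
rewrite -[x ^+ g](powR_mulrn _ (ltW x_gt0)).
rewrite -[(x `^ _) ^+ S]powR_mulrn ?powR_ge0 // -powRrM -powRD; last first.
  by rewrite (gt_eqF x_gt0) implybT.
apply: ler_powR => //.
have : (3 * g)%:R <= S%:R :> R by rewrite ler_nat.
rewrite natrM; lra.
Qed.

Lemma powR_lt1 (R : realType) (x y : R) : 1 < x -> y < 0 -> x `^ y < 1.
Proof.
move=> x_gt1 y_lt0; rewrite /powR gt_eqF ?(lt_trans ltr01) //.
by rewrite expR_lt1 nmulr_rlt0 // ln_gt0.
Qed.

Lemma S93_term_norm_le (R : realType) (F : finFieldType) (p r : nat)
    (a : 'I_r -> nat) (c : 'I_r -> R) (B : R) :
  (2 < r)%N -> (forall i, 0 < a i)%N -> (forall i, `|c i| <= B) ->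
  `|(\prod_(i < r) c i) * (#|F|%:R `^ (- ((\sum_(i < r) a i)%N%:R / 2)))
    * (\sum_(m <- divisors (\big[gcdn/0%N]_(i < r) a i)
         | ~~ (m * p %| \big[gcdn/0%N]_(i < r) a i)%N)
         (npi F m)%:R * m%:R ^+ r)|
  <= B ^+ r * \prod_(i < r) ((a i)%:R ^+ 2 * (#|F|%:R `^ (- 6^-1)) ^+ a i).
Proof.
move=> r_gt2 a_gt0 c_le.
set q : R := #|F|%:R; set S := (\sum_(i < r) a i)%N.
set g := (\big[gcdn/0%N]_(i < r) a i)%N; set D := \sum_(m <- _ | _) _.
have i0 : 'I_r by exists 0%N; rewrite (ltn_trans _ r_gt2).
have B_ge0 : 0 <= B := le_trans (normr_ge0 _) (c_le i0).
have g_gt0 : (0 < g)%N by rewrite (dvdn_gt0 (a_gt0 i0)) // (biggcdn_inf i0).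
have gS : (3 * g <= S)%N.
  apply: leq_trans _ (card_mul_biggcdn_leq_sum a_gt0); rewrite card_ord.
  by rewrite leq_mul2r r_gt2 orbT.
have g_le_prod : (g ^ r.+1 <= (\prod_(i < r) a i) ^ 2)%N.
  apply: leq_trans (leq_pexp2l g_gt0 (_ : r.+1 <= r * 2)%N) _.
    by rewrite muln2 -addnn -addn1 leq_add2l (ltn_trans _ r_gt2).
  rewrite expnM leq_exp2r // -[X in (g ^ X)%N](card_ord r).
  exact: expn_biggcdn_leq_prod.
have D_le : 0 <= D <= (g ^ r.+1 * #|F| ^ g)%N%:R.
  rewrite sum_divisors_npi_le // andbT.
  by apply: sumr_ge0 => m _; rewrite mulr_ge0 ?exprn_ge0.
have prod_c_le : `|\prod_(i < r) c i| <= B ^+ r.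
  rewrite normr_prod -[r in B ^+ r]card_ord -prodr_const.
  by apply: ler_prod => i _; rewrite normr_ge0 c_le.
have [D_ge0 D_le_bound] := andP D_le.
rewrite !normrM (ger0_norm (powR_ge0 _ _)) (ger0_norm D_ge0) -mulrA.
apply: ler_pM => //; first by rewrite mulr_ge0 ?powR_ge0.
rewrite big_split /= prodrXr prodrXl -natr_prod -/S.
apply: le_trans (_ : _ <= q `^ (- (S%:R / 2)) * (g ^ r.+1 * #|F| ^ g)%N%:R) _.
  by rewrite ler_wpM2l ?powR_ge0 ?D_le_bound.
rewrite natrM !natrX -/q mulrCA; apply: ler_pM.
- by rewrite exprn_ge0.
- by rewrite mulr_ge0 ?powR_ge0 ?exprn_ge0.
- by rewrite -!natrX ler_nat.
- by apply: powR_weight_le gS; rewrite ler1n ltnW // finNzRing_gt1.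
Qed.

Theorem lemma9p3 (R : realType) (F : finFieldType) (p : nat)
    (hp : prime p) (hodd : odd p) (hchar : p \in [pchar F])
    (beta : R) (hb0 : 0 < beta) (hb1 : beta < 1)
    (s : bool) (Ihat : nat -> int -> R) (hI : BS_family beta s Ihat)
    (r : nat) (hr : (2 < r)%N) :
  exists C : R, forall K : nat, (1 <= K)%N -> `|S93 F p r Ihat K| <= C.
Proof.
set q : R := #|F|%:R; set v := q `^ (- 6^-1).
have q_gt1 : 1 < q by rewrite ltr1n finNzRing_gt1.
have v_gt0 : 0 < v by rewrite powR_gt0 // (lt_trans ltr01).
have v_lt1 : v < 1 by rewrite powR_lt1 // oppr_lt0 invr_gt0.
have [M sum_le_M] := sum_sqr_geometric_bounded v_gt0 v_lt1.
set B := beta + 1; exists (B ^+ r * M ^+ r) => K K_gt0.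
pose f (j : 'I_K) := j.+1%:R ^+ 2 * v ^+ j.+1.
have Ihat_le (j : 'I_K) : `|Ihat K j.+1%:Z| <= B.
  by apply: BS_coef_norm_le hb0 hI K_gt0 _; rewrite ger0_norm // lez_nat.
apply: le_trans (ler_norm_sum _ _ _) _.
apply: le_trans
  (_ : _ <= \sum_(k : {ffun 'I_r -> 'I_K}) B ^+ r * \prod_(i < r) f (k i)) _.
  apply: ler_sum => k _.
  exact: S93_term_norm_le hr (fun i => ltn0Sn (k i)) (fun i => Ihat_le (k i)).
rewrite -mulr_sumr -(bigA_distr_bigA (fun (_ : 'I_r) (j : 'I_K) => f j)) /=.
have B_ge0 : 0 <= B by rewrite addr_ge0 // ltW.
have f_ge0 j : 0 <= f j by rewrite mulr_ge0 // exprn_ge0 // ltW.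
rewrite prodr_const card_ord ler_wpM2l ?exprn_ge0 //.
have sum_f_ge0 : 0 <= \sum_(j < K) f j by apply: sumr_ge0 => j _; exact: f_ge0.
by apply: lerXn2r; rewrite ?nnegrE ?(le_trans sum_f_ge0) ?sum_le_M.
Qed.
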